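(* Let $N\ge2$. Let $\mathbf s=[s_1,\dots,s_{2^N}]^{\mathrm T}$ be given in TT format: $s_{(k_1,\dots,k_N)}=\sum_{r_1=1}^{R_1}\cdots\sum_{r_{N-1}=1}^{R_{N-1}}s^{(1)}_{1,k_1,r_1}s^{(2)}_{r_1,k_2,r_2}\cdots s^{(N)}_{r_{N-1},k_N,1}$ for $k_m\in\{1,2\}$, with $R_0=R_N=1$. Let $\mathbf H\in\mathbb R^{2^N\times2^N}$ be the upper anti-triangular Hankel matrix with entries $\mathbf H_{ij}=s_{2^N+1-i-j}$ if $i+j\le 2^N$ and $\mathbf H_{ij}=0$ otherwise (so its first row is $(s_{2^N-1},\dots,s_1,0)$). Let $$\mathbf P=\begin{bmatrix}0&1\\1&0\end{bmatrix},\quad\mathbf Q=\begin{bmatrix}1&0\\0&0\end{bmatrix},\quad\mathbf R=\begin{bmatrix}0&0\\0&1\end{bmatrix},$$ and define the block matrices $$\widetilde{\mathbf M}^{(N)}_1=\begin{bmatrix}\mathbf P&\mathbf Q\end{bmatrix},\ \widetilde{\mathbf M}^{(n)}_1=\begin{bmatrix}\mathbf P&\mathbf Q\\\mathbf 0&\mathbf R\end{bmatrix}\ (2\le n\le N-1),\ \widetilde{\mathbf M}^{(1)}_1=\begin{bmatrix}\mathbf Q\\\mathbf R\end{bmatrix},$$ $$\widetilde{\mathbf M}^{(N)}_2=\begin{bmatrix}\mathbf Q&\mathbf 0\end{bmatrix},\ \widetilde{\mathbf M}^{(n)}_2=\begin{bmatrix}\mathbf Q&\mathbf 0\\\mathbf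 R&\mathbf P\end{bmatrix}\ (2\le n\le N-1),\ \widetilde{\mathbf M}^{(1)}_2=\begin{bmatrix}\mathbf 0\\\mathbf P\end{bmatrix}.$$ Denote by $\mathbf M^{(n)}_{q_n,k,q_{n-1}}\in\mathbb R^{2\times2}$ the $(q_n,q_{n-1})$-th $2\times2$ block of $\widetilde{\mathbf M}^{(n)}_k$ (so $q_N=1$, $q_0=1$, and $q_n\in\{1,2\}$ for $1\le n\le N-1$). For $t_n=(r_n,q_n)$ define $$\mathbf H^{(n)}_{t_n,t_{n-1}}=\mathbf H^{(n)}_{(r_n,q_n),(r_{n-1},q_{n-1})}=\sum_{k=1}^{2}s^{(n)}_{r_{n-1},k,r_n}\mathbf M^{(n)}_{q_n,k,q_{n-1}}\in\mathbb R^{2\times2},$$ with $t_N=t_0=1$ meaning $(r,q)=(1,1)$. Then $$\mathbf H=\sum_{t_1}\cdots\sum_{t_{N-1}}\mathbf H^{(N)}_{1,t_{N-1}}\otimes\mathbf H^{(N-1)}_{t_{N-1},t_{N-2}}\otimes\cdots\otimes\mathbf H^{(1)}_{t_1,1},$$ where each $t_n$ ranges over the $2R_n$ pairs $(r_n,q_n)\in\{1,\dots,R_n\}\times\{1,2\}$.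
   Context: Multi-index convention: $(k_1,\dots,k_N)=k_1+2(k_2-1)+\cdots+2^{N-1}(k_N-1)$ for $k_m\in\{1,2\}$. $\otimes$ denotes the Kronecker product; in a Kronecker product $\mathbf X\otimes\mathbf Y$ the index of $\mathbf Y$ varies fastest. *)

From HB Require Import structures.
From mathcomp Require Import all_boot all_order all_algebra.
Unset Printing Implicit Defensive.
Import Order.TTheory GRing.Theory Num.Theory.
Local Open Scope ring_scope.

(* Conventions (all indices 0-based, i.e. paper index minus 1):
   - Rk n  = R_n  (n = 0..N), with R_0 = R_N = 1 as hypotheses of the theorem.
   - G n r k r' = s^{(n)}_{r+1, k+1, r'+1} for the core n (1 <= n <= N),
     r : 'I_(R_{n-1}), k : 'I_2, r' : 'I_(R_n).                             *)

Section TT.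
Variable R : nzRingType.
Variable Rk : nat -> nat.
Variable G : forall n : nat, 'I_(Rk n.-1) -> 'I_2 -> 'I_(Rk n) -> R.

(* Row vector of partial TT products s^{(1)}_{1,k_1,:} ... s^{(n)}_{:,k_n,:};
   kk m is the (0-based) value k_m - 1. *)
Fixpoint ttrow (kk : nat -> 'I_2) (n : nat) : 'rV[R]_(Rk n) :=
  match n with
  | 0 => const_mx 1
  | n'.+1 => ttrow kk n' *m \matrix_(i, j) @G n'.+1 i (kk n'.+1) j
  end.

(* The (0-based) digit k_m - 1 of the 0-based linear index p = (k_1,...,k_N) - 1,
   following (k_1,...,k_N) = k_1 + 2(k_2-1) + ... + 2^{N-1}(k_N-1). *)
Definition kdig (p : nat) (m : nat) : 'I_2 := inord ((p %/ 2 ^ m.-1) %% 2).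

(* s_{p+1} in TT format (the sum over j ranges over the single index r_N = 1). *)
Definition sval (N p : nat) : R := \sum_(j < Rk N) ttrow (kdig p) N 0 j.

Definition Hmat (N : nat) : 'M[R]_(2 ^ N) :=
  \matrix_(i, j) if (i + j + 2 <= 2 ^ N)%N then sval N (2 ^ N - 2 - i - j) else 0.

Definition Pm : 'M[R]_2 := \matrix_(i, j) (i != j)%:R.
Definition Qm : 'M[R]_2 := \matrix_(i, j) ((i == 0 :> nat) && (j == 0 :> nat))%:R.
Definition Rm : 'M[R]_2 := \matrix_(i, j) ((i == 1 :> nat) && (j == 1 :> nat))%:R.

(* Mblk N n q k q' = M^{(n)}_{q+1, k+1, q'+1}: the (q+1, q'+1)-th 2x2 block of
   \tilde M^{(n)}_{k+1}.  For n = N only q = 0 is meaningful; for n = 1 only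
   q' = 0 is meaningful. *)
Definition Mblk (N n : nat) (q k q' : 'I_2) : 'M[R]_2 :=
  let q0 := (q == 0 :> nat) in let k0 := (k == 0 :> nat) in
  let q'0 := (q' == 0 :> nat) in
  if n == N then
    (* ~M^{(N)}_1 = [P Q],  ~M^{(N)}_2 = [Q 0] *)
    (if k0 then (if q'0 then Pm else Qm) else (if q'0 then Qm else 0))
  else if n == 1%N then
    (* ~M^{(1)}_1 = [Q; R],  ~M^{(1)}_2 = [0; P] *)
    (if k0 then (if q0 then Qm else Rm) else (if q0 then 0 else Pm))
  else
    (* ~M^{(n)}_1 = [P Q; 0 R],  ~M^{(n)}_2 = [Q 0; R P] *)
    (if k0 then
       (if q0 then (if q'0 then Pm else Qm) else (if q'0 then 0 else Rm))
     else
       (if q0 then (if q'0 then Qm else 0) else (if q'0 then Rm else Pm))).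

Definition Hblk (N n : nat) (r : 'I_(Rk n)) (q : 'I_2) (r' : 'I_(Rk n.-1))
    (q' : 'I_2) : 'M[R]_2 :=
  \sum_(k < 2) @G n r' k r *: Mblk N n q k q'.

(* Kronecker product X (x) Y for a 2x2 matrix X: the block matrix [x_ij Y]
   (so the index of Y varies fastest). *)
Definition kron2 (d : nat) (X : 'M[R]_2) (Y : 'M[R]_d) : 'M[R]_(d + d) :=
  block_mx (X 0 0 *: Y) (X 0 1 *: Y) (X 1 0 *: Y) (X 1 1 *: Y).

Fixpoint dim (n : nat) : nat := if n is n'.+1 then (dim n' + dim n')%N else 1%N.

Lemma dimE n : dim n = (2 ^ n)%N.
Proof. by elim: n => //= n ->; rewrite expnS mul2n addnn. Qed.

(* Kchain N n t_n = sum_{t_{n-1}} ... sum_{t_1}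
       H^{(n)}_{t_n,t_{n-1}} (x) ... (x) H^{(1)}_{t_1,1},
   written recursively (Kronecker product is bilinear):
   Kchain (n+1) t = sum_{t'} H^{(n+1)}_{t,t'} (x) Kchain n t',
   where t' = (r', q') ranges over r' < R_n and q' in {1,2} if n >= 1,
   q' = 1 only if n = 0; Kchain 0 = [1] (1x1). *)
Fixpoint Kchain (N n : nat) : 'I_(Rk n) -> 'I_2 -> 'M[R]_(dim n) :=
  match n with
  | 0 => fun _ _ => 1%:M
  | n'.+1 => fun r q =>
      \sum_(r' < Rk n') \sum_(q' < 2 | (0 < n')%N || (q' == 0 :> nat))
         kron2 _ (@Hblk N n'.+1 r q r' q') (Kchain N n' r' q')
  end.

End TT.

Arguments Hmat {R Rk} G N.
Arguments Kchain {R Rk} G N n.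

From Pilot Require Import Defs.
From HB Require Import structures.
From mathcomp Require Import all_boot all_order all_algebra.
From mathcomp Require Import zify ring.
Import Order.TTheory GRing.Theory Num.Theory.
Local Open Scope ring_scope.

(* The partial chain [Kchain n r q] is a Hankel block of the sequence
   [p |-> ttrow (kdig p) n] of partial TT products of length 2^n: its (i, j)
   entry is the term of index 2^n (q + 1) - (i + j + 2) when that index lies in
   [0, 2^n), and 0 otherwise (q = 0 gives the upper anti-triangular part, q = 1
   the lower one).  Writing i = a 2^n + i', j = b 2^n + j', the Hankel index at
   level n + 1 is k 2^n plus the level-n index of (i', j') in block q', exactly
   when k + a + b + q' = 2 q + 1; and the 2x2 blocks M^{(n)}_{q,k,q'} are the
   matrices [a, b |-> (k + a + b + q' == 2 q + 1)].  So one Kronecker step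
   reads off one more binary digit k of the index, which is the digit consumed
   by the next TT core. *)

Definition hankel_support (n q i j : nat) : bool :=
  (i + j + 2 <= 2 ^ n * q.+1 < 2 ^ n + (i + j + 2))%N.

Definition hankel_index (n q i j : nat) : nat := (2 ^ n * q.+1 - (i + j + 2))%N.

Lemma hankel_support_upper n i j :
  hankel_support n 0 i j = (i + j + 2 <= 2 ^ n)%N.
Proof. by rewrite /hankel_support; apply/andP/idP => [[]|]; lia. Qed.

Lemma hankel_digit_sum (R : nzRingType) n (a b q i j : nat)
    (F : nat -> nat -> R) :
  (a < 2)%N -> (b < 2)%N -> (q < 2)%N -> (i < 2 ^ n)%N -> (j < 2 ^ n)%N ->
  let I := hankel_index n.+1 q (a * 2 ^ n + i) (b * 2 ^ n + j) in
  \sum_(q' < 2) \sum_(k < 2) ((k + a + b + q' == 1 + 2 * q)%N%:R *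
     (if hankel_support n q' i j then F k (hankel_index n q' i j) else 0))
  = if hankel_support n.+1 q (a * 2 ^ n + i) (b * 2 ^ n + j)
    then F (I %/ 2 ^ n)%N (I %% 2 ^ n)%N else 0.
Proof.
move=> ha hb hq hi hj I; rewrite {}/I.
rewrite !big_ord_recr !big_ord0 /= !add0r.
have -> : hankel_support n 1 i j = (2 ^ n < i + j + 2)%N.
  by rewrite /hankel_support; apply/andP/idP => [[]|]; lia.
rewrite hankel_support_upper /hankel_support /hankel_index.
rewrite expnS; move: hi hj; set B := (2 ^ n)%N => hi hj.
have B_gt0 : (0 < B)%N by lia.
case: a ha => [|[|//]] _; case: b hb => [|[|//]] _; case: q hq => [|[|//]] _ /=;
  rewrite ?mul1r ?mul0r ?addr0 ?add0r;
  (case: (leqP (i + j + 2) B) => hS; rewrite /= ?mul1r ?mul0r ?addr0 ?add0r);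
  case: ifP => H //.
all: try by exfalso; move: H hS hi hj; lia.
all: try by move: H hS hi hj; lia.
all: lazymatch goal with |- ?f ?k ?p = ?f (?X %/ _)%N _ =>
  have -> : X = (k * B + p)%N by lia end.
all: by rewrite divnMDl // modnMDl divn_small ?modn_small ?addn0 //; lia.
Qed.

Lemma kdig_modn p n m : (0 < m <= n)%N -> kdig (p %% 2 ^ n) m = kdig p m.
Proof.
move=> /andP[m_gt0 le_mn]; rewrite /kdig; congr inord.
have -> : (2 ^ n = 2 ^ (n - m.-1) * 2 ^ m.-1)%N by rewrite -expnD subnK //; lia.
rewrite -modn_divl; apply: modn_dvdm.
by rewrite -{1}(expn1 2) dvdn_exp2l //; lia.
Qed.

Section PartialProducts.

Variable R : comNzRingType.
Variable Rk : nat -> nat.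
Variable G : forall n : nat, 'I_(Rk n.-1) -> 'I_2 -> 'I_(Rk n) -> R.

Lemma eq_ttrow kk kk' n :
  (forall m, (0 < m <= n)%N -> kk m = kk' m) ->
  ttrow R Rk G kk n = ttrow R Rk G kk' n.
Proof.
elim: n => [|n IHn] eq_kk //=.
rewrite eq_kk ?leqnn // IHn // => m /andP[m_gt0 le_mn].
by apply: eq_kk; rewrite m_gt0 leqW.
Qed.

Lemma ttrow_digit_split p n r :
  ttrow R Rk G (kdig p) n.+1 0 r =
  \sum_(r' < Rk n) ttrow R Rk G (kdig (p %% 2 ^ n)) n 0 r' * G n.+1 r' (kdig p n.+1) r.
Proof.
rewrite /= mxE; apply: eq_bigr => r' _; rewrite mxE.
by rewrite (@eq_ttrow _ (kdig (p %% 2 ^ n))) // => m /kdig_modn.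
Qed.

Definition hankel_entry n (r : 'I_(Rk n)) (q i j : nat) : R :=
  if hankel_support n q i j then ttrow R Rk G (kdig (hankel_index n q i j)) n 0 r
  else 0.

Lemma hankel_entry0 (r : 'I_(Rk 0)) q : hankel_entry 0 r q 0 0 = (q == 1)%:R.
Proof.
by rewrite /hankel_entry /hankel_support /= mxE; case: q => [|[|q]].
Qed.

Lemma hankel_entry_succ n r (a b : 'I_2) q i j :
  (q < 2)%N -> (i < 2 ^ n)%N -> (j < 2 ^ n)%N ->
  hankel_entry n.+1 r q (a * 2 ^ n + i) (b * 2 ^ n + j) =
  \sum_(r' < Rk n) \sum_(q' < 2)
     (\sum_(k < 2) G n.+1 r' k r * (k + a + b + q' == 1 + 2 * q)%N%:R) *
     hankel_entry n r' q' i j.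
Proof.
move=> hq hi hj.
pose F k p := \sum_(r' < Rk n)
  ttrow R Rk G (kdig p) n 0 r' * G n.+1 r' (inord (k %% 2)) r.
transitivity (\sum_(q' < 2) \sum_(k < 2) ((k + a + b + q' == 1 + 2 * q)%N%:R *
    (if hankel_support n q' i j then F k (hankel_index n q' i j) else 0))).
  rewrite hankel_digit_sum // /hankel_entry; case: ifP => // _.
  exact: ttrow_digit_split.
rewrite [RHS]exchange_big; apply: eq_bigr => q' _ /=.
rewrite /hankel_entry; case: (hankel_support n q' i j); last first.
  by rewrite !big1 // => ? _; rewrite ?mulr0.
under [RHS]eq_bigr => r' _ do rewrite mulr_suml.
rewrite [RHS]exchange_big; apply: eq_bigr => k _.
rewrite /F mulr_sumr; apply: eq_bigr => r' _.
by rewrite modn_small // inord_val; ring.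
Qed.

End PartialProducts.

Arguments hankel_entry {R Rk} G n r q i j.

Section KroneckerChain.

Variable R : comNzRingType.
Variable N : nat.
Variable Rk : nat -> nat.
Variable G : forall n : nat, 'I_(Rk n.-1) -> 'I_2 -> 'I_(Rk n) -> R.

Lemma Mblk_inner n (q k q' a b : 'I_2) : (1 < n)%N ->
  Mblk R N n q k q' a b =
  (k + a + b + q' == 1 + 2 * (if n == N then 0 else q))%N%:R.
Proof.
move=> n_gt1; rewrite /Mblk (_ : (n == 1%N) = false); last by apply/eqP; lia.
case: (n == N);
case: q => [[|[|//]] ?]; case: k => [[|[|//]] ?]; case: q' => [[|[|//]] ?];
case: a => [[|[|//]] ?]; case: b => [[|[|//]] ?]; by rewrite /= ?mxE.
Qed.

(* At level 1 the chain ends in the 1x1 block [1], which is the level-0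
   Hankel block with q' = 1, not q' = 0. *)
Lemma Mblk_first (q k q' a b : 'I_2) : N != 1%N ->
  Mblk R N 1 q k q' a b = (k + a + b + 1 == 1 + 2 * q)%N%:R.
Proof.
move=> N_neq1; rewrite /Mblk eq_sym (negbTE N_neq1) eqxx.
case: q => [[|[|//]] ?]; case: k => [[|[|//]] ?]; case: q' => [[|[|//]] ?];
case: a => [[|[|//]] ?]; case: b => [[|[|//]] ?]; by rewrite /= ?mxE.
Qed.

Definition kron_idx {d : nat} (a : 'I_2) (i : 'I_d) : 'I_(d + d) :=
  if a == 0 :> nat then lshift d i else rshift d i.

Lemma kron_idxE (m : nat) a (i : 'I_(Defs.dim m)) :
  @nat_of_ord (Defs.dim m.+1) (kron_idx a i) = (a * 2 ^ m + i)%N.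
Proof.
by rewrite /kron_idx -dimE; case: a => [[|[|//]] ?] /=; rewrite ?mul0n ?mul1n.
Qed.

Lemma kron_idxP d (i : 'I_(d + d)) : exists a k, i = kron_idx a k.
Proof.
case: (splitP i) => [k Hi|k Hi]; [exists 0, k | exists 1, k];
  by apply: val_inj; rewrite /kron_idx /= Hi.
Qed.

Lemma kron2E d X (Y : 'M_d) a b i j :
  kron2 R d X Y (kron_idx a i) (kron_idx b j) = X a b * Y i j.
Proof.
rewrite /kron2 /kron_idx.
case: a => [[|[|//]] ha]; case: b => [[|[|//]] hb] /=;
rewrite ?block_mxEul ?block_mxEur ?block_mxEdl ?block_mxEdr mxE;
by congr (X _ _ * _); apply: val_inj.
Qed.

Lemma Kchain_kron_idx n r q a b i j :
  Kchain G N n.+1 r q (kron_idx a i) (kron_idx b j) =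
  \sum_(r' < Rk n) \sum_(q' < 2 | (0 < n)%N || (q' == 0 :> nat))
     (\sum_(k < 2) G n.+1 r' k r * Mblk R N n.+1 q k q' a b) *
     Kchain G N n r' q' i j.
Proof.
rewrite /= summxE; apply: eq_bigr => r' _; rewrite summxE.
apply: eq_bigr => q' _; rewrite kron2E /Hblk summxE.
by congr (_ * _); apply: eq_bigr => k _; rewrite mxE.
Qed.

Lemma Kchain_hankel n : (2 <= N)%N -> (n < N)%N ->
  forall r (q : 'I_2) i j,
  Kchain G N n.+1 r q i j = hankel_entry G n.+1 r (if n.+1 == N then 0%N else q) i j.
Proof.
move=> N_ge2; have N_neq1 : N != 1%N by apply/eqP; lia.
elim: n => [|n IHn] lt_nN r q i j.
- have [a [i' ->]] := @kron_idxP (Defs.dim 0) i.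
  have [b [j' ->]] := @kron_idxP (Defs.dim 0) j.
  rewrite (_ : (1 == N) = false); last by apply/eqP; lia.
  rewrite Kchain_kron_idx !kron_idxE (ord1 i') (ord1 j') !addn0.
  rewrite -(addn0 (a * 2 ^ 0)%N) -(addn0 (b * 2 ^ 0)%N) hankel_entry_succ //.
  apply: eq_bigr => r' _; rewrite big_mkcond [LHS]big_ord_recr [RHS]big_ord_recr.
  rewrite !big_ord1 /= !hankel_entry0 mxE mulr0 mulr1 add0r addr0.
  by rewrite eqxx mulr1; apply: eq_bigr => k _; rewrite Mblk_first.
- have [a [i' ->]] := @kron_idxP (Defs.dim n.+1) i.
  have [b [j' ->]] := @kron_idxP (Defs.dim n.+1) j.
  have hq : ((if n.+2 == N then 0 else q) < 2)%N by case: ifP.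
  rewrite Kchain_kron_idx !kron_idxE hankel_entry_succ -?dimE //.
  apply: eq_bigr => r' _; rewrite big_mkcond; apply: eq_bigr => q' _ /=.
  rewrite IHn 1?ltnW // (_ : (n.+1 == N) = false); last by apply/eqP; lia.
  congr (_ * _); apply: eq_bigr => k _.
  by rewrite Mblk_inner.
Qed.

End KroneckerChain.

Theorem mainTheorem6 (R : realFieldType) (N : nat) (Rk : nat -> nat)
    (G : forall n : nat, 'I_(Rk n.-1) -> 'I_2 -> 'I_(Rk n) -> R)
    (hN : (2 <= N)%N) (hR0 : Rk 0%N = 1%N) (hRN : Rk N = 1%N) :
  Hmat G N =
  castmx (dimE N, dimE N) (\sum_(r < Rk N) Kchain G N N r 0).
Proof.
apply/matrixP => i j; rewrite castmxE summxE mxE.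
case: N hN hRN G i j => [//|n] hN _ G i j.
under eq_bigr => r _ do rewrite Kchain_hankel // eqxx.
rewrite /hankel_entry hankel_support_upper /=.
case: ifP => h; last by rewrite big1.
suff -> : hankel_index n.+1 0 i j = (2 ^ n.+1 - 2 - i - j)%N by [].
by rewrite /hankel_index; lia.
Qed.
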